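(* Let $(M,g)$ be an $n$-dimensional pseudo-Riemannian manifold, $T$ a Killing tensor (respectively, a traceless conformal tensor), and $E_\rho$ a regular eigenspace of $T$ with eigenvalue function $\rho$. Then $(T-\rho g)\{x,y\}=g(x,y)(\mathrm d\rho-t)$ for every $x,y\in E_\rho$, with $t=0$ (respectively, $t=\frac{2}{n+2}\nabla\cdot T$). Moreover $\mathrm d\rho\in E_\rho^{\perp}$ (respectively, $2\nabla\cdot T-(n+2)\mathrm d\rho\in E_\rho^{\perp}$).
   Context: $\nabla$ is the Levi-Civita connection; vectors and 1-forms are identified via $g$; $T$ is viewed both as a bilinear form and as an endomorphism. $\{x,y\}=\nabla_xy+\nabla_yx$; $(\nabla\cdot T)_b=\nabla^aT_{ab}$. An eigenspace $E_\rho=\{x:T(x)=\rho x\}$ is regular if it is a distribution of constant rank on which $g$ is nondegenerate (equivalently, it admits a basis of non-null vectors). Killing tensor: symmetric $K$ with $\nabla_{(a}K_{bc)}=0$. Conformal tensor: traceless symmetric $T$ with $\nabla_{(a}T_{bc)}=g_{(ab}t_{c)}$ for some 1-form $t$. *)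

(* Local coordinate model of a
   pseudo-Riemannian manifold: an open set U of R^n (row vectors) with a
   symmetric invertible smooth metric matrix field G. *)
From HB Require Import structures.
From mathcomp Require Import all_boot all_order all_algebra.
From mathcomp Require Import all_classical all_reals all_analysis.
Set Implicit Arguments. Unset Strict Implicit. Unset Printing Implicit Defensive.
Import Order.TTheory GRing.Theory Num.Theory.
Import numFieldNormedType.Exports.
Local Open Scope classical_set_scope.
Local Open Scope ring_scope.

Section Geo.
Variables (R : realType) (n : nat).
Local Notation V := 'rV[R]_n.

Definition ecoord (i : 'I_n) : V := delta_mx 0 i.
Definition partial (i : 'I_n) (f : V -> R) : V -> R := fun p => derive f p (ecoord i).

Fixpoint Ck (k : nat) (U : set V) (f : V -> R) : Prop :=
  match k with
  | 0 => forall p, U p -> {for p, continuous f}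
  | k'.+1 => (forall i p, U p -> derivable f p (ecoord i)) /\
             (forall i, Ck k' U (partial i f))
  end.
Definition smooth_on (U : set V) (f : V -> R) : Prop := forall k, Ck k U f.

Definition smooth_mx_on (U : set V) (A : V -> 'M[R]_n) : Prop :=
  forall i j, smooth_on U (fun p => A p i j).
Definition smooth_vf_on (U : set V) (x : V -> 'rV[R]_n) : Prop :=
  forall i, smooth_on U (fun p => x p 0 i).

Definition metric_on (U : set V) (G : V -> 'M[R]_n) : Prop :=
  smooth_mx_on U G /\ forall p, U p -> (G p)^T = G p /\ G p \in unitmx.

Definition ginv (G : V -> 'M[R]_n) (p : V) : 'M[R]_n := invmx (G p).

Definition christoffel (G : V -> 'M[R]_n) (k i j : 'I_n) (p : V) : R :=
  2^-1 * \sum_(l < n) ginv G p k l *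
    (partial i (fun q => G q j l) p + partial j (fun q => G q i l) p
     - partial l (fun q => G q i j) p).

Definition nablaT (G T : V -> 'M[R]_n) (a b c : 'I_n) (p : V) : R :=
  partial a (fun q => T q b c) p
  - \sum_(k < n) christoffel G k a b p * T p k c
  - \sum_(k < n) christoffel G k a c p * T p b k.

Definition nablaV (G : V -> 'M[R]_n) (x y : V -> 'rV[R]_n) (p : V) : 'rV[R]_n :=
  \row_k (\sum_(i < n) x p 0 i * partial i (fun q => y q 0 k) p
          + \sum_(i < n) \sum_(j < n) christoffel G k i j p * x p 0 i * y p 0 j).

Definition symbr (G : V -> 'M[R]_n) (x y : V -> 'rV[R]_n) (p : V) : 'rV[R]_n :=
  nablaV G x y p + nablaV G y x p.

(* full symmetrization (times 6) of a 3-index quantity *)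
Definition sym3 (F : 'I_n -> 'I_n -> 'I_n -> R) (a b c : 'I_n) : R :=
  F a b c + F a c b + F b a c + F b c a + F c a b + F c b a.

Definition symmetric_field_on (U : set V) (T : V -> 'M[R]_n) : Prop :=
  smooth_mx_on U T /\ forall p, U p -> (T p)^T = T p.

Definition killing_on (U : set V) (G T : V -> 'M[R]_n) : Prop :=
  symmetric_field_on U T /\
  forall p, U p -> forall a b c, sym3 (fun a b c => nablaT G T a b c p) a b c = 0.

Definition gtrace (G T : V -> 'M[R]_n) (p : V) : R :=
  \sum_(a < n) \sum_(b < n) ginv G p a b * T p a b.

Definition conformal_on (U : set V) (G T : V -> 'M[R]_n) : Prop :=
  symmetric_field_on U T /\ (forall p, U p -> gtrace G T p = 0) /\
  exists t : 'I_n -> V -> R, forall p, U p -> forall a b c,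
    sym3 (fun a b c => nablaT G T a b c p) a b c =
    sym3 (fun a b c => G p a b * t c p) a b c.

Definition divT (G T : V -> 'M[R]_n) (b : 'I_n) (p : V) : R :=
  \sum_(a < n) \sum_(c < n) ginv G p a c * nablaT G T c a b p.

(* T as an endomorphism (acting on row vectors x |-> x *m endo):
   (T x)^a = g^{ac} T_{cb} x^b *)
Definition endo (G T : V -> 'M[R]_n) (p : V) : 'M[R]_n := T p *m ginv G p.

Definition Espace (G T : V -> 'M[R]_n) (rho : V -> R) (p : V) : 'M[R]_n :=
  eigenspace (endo G T p) (rho p).

Definition in_eig (G T : V -> 'M[R]_n) (rho : V -> R) (p : V) (v : 'rV[R]_n) : bool :=
  (v <= Espace G T rho p)%MS.

Definition gform (G : V -> 'M[R]_n) (p : V) (x y : 'rV[R]_n) : R :=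
  \sum_(a < n) \sum_(b < n) G p a b * x 0 a * y 0 b.

Definition regular_eigenspace_on (U : set V) (G T : V -> 'M[R]_n) (rho : V -> R)
  : Prop :=
  (exists r : nat, forall p, U p -> \rank (Espace G T rho p) = r) /\
  (forall p, U p -> forall v, in_eig G T rho p v ->
     (forall w, in_eig G T rho p w -> gform G p v w = 0) -> v = 0).

End Geo.

From HB Require Import structures.
From mathcomp Require Import all_boot all_order all_algebra.
From mathcomp Require Import all_classical all_reals all_analysis.
From mathcomp Require Import ring lra.
Import Order.TTheory GRing.Theory Num.Theory.
Import numFieldNormedType.Exports.
Set Implicit Arguments. Unset Strict Implicit. Unset Printing Implicit Defensive.
Local Open Scope classical_set_scope.
Local Open Scope ring_scope.

(* Write A = T - rho g, so that E_rho is the kernel of A and regularity makes the rank of A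
   constant.  The derivative of a symmetric family of matrices whose rank never exceeds its
   rank at 0 vanishes on the kernel, and since nabla g = 0 this gives
   (nabla_z T)(v, w) = d rho(z) g(v, w) for v, w in E_rho.  Contracting
   nabla_(a T_bc) = g_(ab t_c) with three vectors of E_rho and polarising (g is
   nondegenerate on E_rho) yields d rho = t on E_rho.  Differentiating x A = 0 along an
   eigen-field gives (nabla_z x) A = - x nabla_z A, which expresses {x, y} A through
   nabla T; contracting the same identity with x, y and a free index then gives
   (T - rho g){x, y} = g(x, y)(d rho - t).  Tracing it with g^-1, T being traceless, gives
   t = 2/(n+2) nabla.T, and a Killing tensor is the case t = 0. *)

Section big_calculus.
Variables (R : realType) (V : normedModType R).

Lemma derivable_big_sum (I : Type) (r : seq I) (P : pred I) (F : I -> V -> R) p v :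
  (forall i, P i -> derivable (F i) p v) ->
  derivable (fun q => \sum_(i <- r | P i) F i q) p v.
Proof.
move=> dF; rewrite -fct_sumE.
by apply: (big_ind (fun f => derivable f p v));
  [exact: derivable_cst | move=> f g df dg; exact: (derivableD df dg) |].
Qed.

Lemma derivable_big_prod (I : Type) (r : seq I) (P : pred I) (F : I -> V -> R) p v :
  (forall i, P i -> derivable (F i) p v) ->
  derivable (fun q => \prod_(i <- r | P i) F i q) p v.
Proof.
move=> dF; rewrite -fct_prodE.
by apply: (big_ind (fun f => derivable f p v));
  [exact: derivable_cst | move=> f g df dg; exact: (derivableM df dg) |].
Qed.

Lemma derivable_det m (M : V -> 'M[R]_m) p v :
  (forall i j, derivable (fun q => M q i j) p v) ->
  derivable (fun q => \det (M q)) p v.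
Proof.
move=> dMij; apply: derivable_big_sum => s _.
apply: derivableM; first exact: derivable_cst.
by apply: derivable_big_prod => i _; exact: dMij.
Qed.

End big_calculus.

Section entrywise_derivative.
Variables (R : realType) (n : nat).
Local Notation V := 'rV[R]_n.

Definition partialmx m k (F : V -> 'M[R]_(m, k)) (a : 'I_n) (p : V) : 'M[R]_(m, k) :=
  \matrix_(i, j) partial a (fun q => F q i j) p.

Definition grad (f : V -> R) (p : V) (a : 'I_n) : R := partial a f p.

Definition derivable_mx m k (F : V -> 'M[R]_(m, k)) (a : 'I_n) (p : V) : Prop :=
  forall i j, derivable (fun q => F q i j) p (ecoord R a).

Lemma derivable_mx_mul m k l (F : V -> 'M[R]_(m, k)) (H : V -> 'M[R]_(k, l)) a p :
  derivable_mx F a p -> derivable_mx H a p ->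
  derivable_mx (fun q => F q *m H q) a p.
Proof.
move=> dF dH i j; under [X in derivable X]funext do rewrite mxE.
by apply: derivable_big_sum => c _; exact: derivableM.
Qed.

Lemma partialmx_mul m k l (F : V -> 'M[R]_(m, k)) (H : V -> 'M[R]_(k, l)) a p :
  derivable_mx F a p -> derivable_mx H a p ->
  partialmx (fun q => F q *m H q) a p = partialmx F a p *m H p + F p *m partialmx H a p.
Proof.
move=> dF dH; apply/matrixP => i j; rewrite !mxE /partial.
under [X in derive X]funext do rewrite mxE.
rewrite -fct_sumE derive_sum; last by move=> c; exact: derivableM.
rewrite -big_split; apply: eq_bigr => c _ /=.
rewrite deriveM; [|exact: dF|exact: dH].
by rewrite !mxE addrC; congr (_ + _); exact: mulrC.
Qed.

Lemma partial_mxtrace m (F : V -> 'M[R]_m) a p :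
  derivable_mx F a p -> partial a (fun q => \tr (F q)) p = \tr (partialmx F a p).
Proof.
move=> dF; rewrite /partial -fct_sumE derive_sum; last by move=> i; exact: dF.
by apply: eq_bigr => i _; rewrite mxE.
Qed.

Lemma partial_near_cst (f : V -> R) (c : R) a p :
  (\forall q \near p, f q = c) -> partial a f p = 0.
Proof.
by move=> fc; rewrite /partial (@near_eq_derive _ _ _ _ (cst c)) ?derive_cst.
Qed.

Lemma partialmx_near_cst m k (F : V -> 'M[R]_(m, k)) (C : 'M[R]_(m, k)) a p :
  (\forall q \near p, F q = C) -> partialmx F a p = 0.
Proof.
move=> FC; apply/matrixP => i j; rewrite !mxE (@partial_near_cst _ (C i j)) //.
by apply: filterS FC => q ->.
Qed.

Lemma partialmx_sym m (F : V -> 'M[R]_m) a p :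
  (\forall q \near p, (F q)^T = F q) -> (partialmx F a p)^T = partialmx F a p.
Proof.
move=> FT; apply/matrixP => i j; rewrite !mxE /partial.
by apply: near_eq_derive; apply: filterS FT => q FqT; rewrite -[in LHS]FqT mxE.
Qed.

Lemma derivable_mx_inv m (F : V -> 'M[R]_m) a p :
  (\forall q \near p, F q \in unitmx) -> derivable_mx F a p ->
  derivable_mx (fun q => invmx (F q)) a p.
Proof.
move=> Fu dF i j.
pose f q := (\det (F q))^-1 * cofactor (F q) j i.
have df : derivable f p (ecoord R a).
  apply: derivableM.
    apply: derivableV; last exact: derivable_det.
    by rewrite -unitfE -unitmxE; apply: nbhs_singleton Fu.
  apply: derivableM; first exact: derivable_cst.
  apply: derivable_det => k l.
  by under [X in derivable X]funext do rewrite !mxE; exact: dF.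
apply: near_eq_derivable df; apply: filterS Fu => q Fqu.
by rewrite /f /invmx Fqu !mxE.
Qed.

Lemma partialmx_inv m (F : V -> 'M[R]_m) a p :
  (\forall q \near p, F q \in unitmx) -> derivable_mx F a p ->
  partialmx (fun q => invmx (F q)) a p = - (invmx (F p) *m partialmx F a p *m invmx (F p)).
Proof.
move=> Fu dF; have Fpu : F p \in unitmx := nbhs_singleton Fu.
have : partialmx (fun q => F q *m invmx (F q)) a p = 0.
  by apply: partialmx_near_cst; apply: filterS Fu => q; exact: mulmxV.
rewrite partialmx_mul //; last exact: derivable_mx_inv.
move/(congr1 (mulmx (invmx (F p)))); rewrite mulmx0 mulmxDr [X in _ + X]mulmxA.
by rewrite mulVmx // mul1mx mulmxA addrC => /eqP; rewrite addr_eq0 => /eqP.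
Qed.

Lemma smooth_derivable (U : set V) (f : V -> R) a p :
  smooth_on U f -> U p -> derivable f p (ecoord R a).
Proof. by move=> sf Up; exact: (sf 1%N).1. Qed.

Lemma smooth_mx_derivable (U : set V) (F : V -> 'M[R]_n) a p :
  smooth_mx_on U F -> U p -> derivable_mx F a p.
Proof. by move=> sF Up i j; exact: smooth_derivable (sF i j) Up. Qed.

Lemma smooth_vf_derivable (U : set V) (y : V -> V) a p :
  smooth_vf_on U y -> U p -> derivable_mx y a p.
Proof. by move=> sy Up i j; rewrite ord1; exact: smooth_derivable (sy j) Up. Qed.

End entrywise_derivative.

Section rank_determinant.
Variable F : fieldType.

Lemma det_mul_rank_lt k m (L : 'M[F]_(k, m)) (A : 'M[F]_m) (P : 'M[F]_(m, k)) :
  (\rank A < k)%N -> \det (L *m A *m P) = 0.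
Proof.
move=> rkA; have [//|detZ] := eqVneq (\det (L *m A *m P)) 0.
have /eqP rkZ : row_free (L *m A *m P) by rewrite row_free_unit unitmxE unitfE.
have := leq_trans (mxrankM_maxl (L *m A) P) (mxrankM_maxr L A).
by rewrite rkZ leqNgt rkA.
Qed.

End rank_determinant.

Section symmetric_rank.
Variable R : realFieldType.

Lemma rv_mul_tr_eq0 m (z : 'rV[R]_m) : z *m z^T = 0 -> z = 0.
Proof.
move=> /(congr1 (fun M : 'M[R]_1 => M 0 0)); rewrite !mxE => /eqP.
rewrite psumr_eq0 => [/allP z0|j _]; last by rewrite mxE -expr2 sqr_ge0.
apply/rowP => i; have /implyP := z0 i (mem_index_enum i).
by rewrite mxE mulf_eq0 orbb => /(_ isT) /eqP ->; rewrite mxE.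
Qed.

Lemma row_base_form_unit m (M : 'M[R]_m) : M^T = M ->
  \det (row_base M *m M *m (row_base M)^T) != 0.
Proof.
move=> sM; set X := row_base M; have XM : (X :=: M)%MS := eq_row_base M.
apply/negP => /det0P [u u0 uB]; move/negP: u0; apply.
set y := u *m X; set z := y *m M.
have /submxP [c zc] : (z <= X)%MS by rewrite XM submxMl.
have zX : z *m X^T = 0 by move: uB; rewrite /z /y !mulmxA.
have z0 : z = 0 by apply: rv_mul_tr_eq0; rewrite {2}zc trmx_mul mulmxA zX mul0mx.
have /submxP [c' yc] : (y <= M)%MS by rewrite -XM submxMl.
have y0 : y = 0 by apply: rv_mul_tr_eq0; rewrite {2}yc trmx_mul sM mulmxA -/z z0 mul0mx.
by apply/eqP; apply: (row_free_inj (row_base_free M)); rewrite mul0mx.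
Qed.

End symmetric_rank.

Section constant_rank.
Variable R : realType.

Lemma cvg_det (T : Type) (F : set_system T) (FF : Filter F) m
    (M : T -> 'M[R]_m) (M0 : 'M[R]_m) :
  (forall i j, M x i j @[x --> F] --> M0 i j) -> \det (M x) @[x --> F] --> \det M0.
Proof.
move=> cM; apply: cvg_big => [|s _]; first exact: add_continuous.
apply: cvgM; first exact: cvg_cst.
by apply: cvg_big => [|i _]; [exact: mul_continuous | exact: cM].
Qed.

Lemma cvg_mulmx (T : Type) (F : set_system T) (FF : Filter F) a b c d
    (L : 'M[R]_(a, b)) (M : T -> 'M[R]_(b, c)) (M0 : 'M[R]_(b, c)) (P : 'M[R]_(c, d)) :
  (forall i j, M x i j @[x --> F] --> M0 i j) ->
  forall i j, (L *m M x *m P) i j @[x --> F] --> (L *m M0 *m P) i j.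
Proof.
move=> cM i j; under eq_cvg do rewrite mxE; rewrite mxE.
apply: cvg_big => [|k _]; first exact: add_continuous.
apply: cvgM; last exact: cvg_cst.
under eq_cvg do rewrite mxE; rewrite mxE.
apply: cvg_big => [|l _]; first exact: add_continuous.
by apply: cvgM; [exact: cvg_cst | exact: cM].
Qed.

Lemma cvg_of_diff_quotient (f : R -> R) (l : R) :
  h^-1 * (f h - f 0) @[h --> 0^'] --> l -> f h @[h --> 0^'] --> f 0.
Proof.
move=> df; have : f 0 + h * (h^-1 * (f h - f 0)) @[h --> 0^'] --> f 0 + 0 * l.
  by apply: cvgD; [exact: cvg_cst | apply: cvgM; [exact: cvg_within | exact: df]].
rewrite mul0r addr0; apply: cvg_trans; apply: near_eq_cvg; near=> h.
have h0 : h != 0 by near: h; exact: nbhs_dnbhs_neq.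
by rewrite mulrA mulfV // mul1r addrC subrK.
Unshelve. all: by end_near.
Qed.

Lemma derivative_kernel_form_eq0 m (M : R -> 'M[R]_m) (D : 'M[R]_m) (v w : 'rV[R]_m) :
  (M 0)^T = M 0 ->
  (\forall h \near 0^', (\rank (M h) <= \rank (M 0%R))%N) ->
  (forall i j, h^-1 * (M h i j - M 0 i j) @[h --> 0^'] --> D i j) ->
  v *m M 0 = 0 -> w *m M 0 = 0 -> w *m D *m v^T = 0.
Proof.
(* Border row_base (M 0) by w and by v^T / h: for h != 0 the bordered determinant vanishes
   by the rank bound, and it tends to det (X M0 X^T) * (w D v^T) with a nonzero first factor. *)
move=> sM rkM dMh vM wM; set M0 := M 0 in sM rkM dMh vM wM *.
set X := row_base M0; set L := col_mx X w.
pose P1 : 'M[R]_(m, \rank M0 + 1) := row_mx X^T 0.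
pose P2 : 'M[R]_(m, \rank M0 + 1) := row_mx 0 v^T.
pose Q h := \matrix_(i, j) (h^-1 * (M h i j - M0 i j)).
pose Z h := L *m M h *m P1 + L *m Q h *m P2.
have M0P2 : M0 *m P2 = 0.
  by rewrite mul_mx_row mulmx0 -sM -trmx_mul vM trmx0 row_mx0.
have detZ : \forall h \near 0^', \det (Z h) = 0.
  near=> h; have h0 : h != 0 by near: h; exact: nbhs_dnbhs_neq.
  have -> : Z h = L *m M h *m (P1 + h^-1 *: P2).
    have Qh : Q h = h^-1 *: (M h - M0) by apply/matrixP => i j; rewrite !mxE.
    rewrite /Z Qh -scalemxAr -scalemxAl mulmxBr mulmxBl -(mulmxA L M0) M0P2.
    by rewrite mulmx0 subr0 scalemxAr mulmxDr.
  by apply: det_mul_rank_lt; rewrite addn1 ltnS; near: h; exact: rkM.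
set Z0 := block_mx (X *m M0 *m X^T) (X *m D *m v^T) 0 (w *m D *m v^T).
have Z0E : L *m M0 *m P1 + L *m D *m P2 = Z0.
  rewrite /L /P1 /P2 !mul_col_mx wM !mul_mx_row !mulmx0 !mul0mx.
  by rewrite add_col_mx !add_row_mx !addr0 !add0r.
have cZ : \det (Z h) @[h --> 0^'] --> \det Z0.
  apply: cvg_det => i j; rewrite -Z0E; under eq_cvg do rewrite mxE; rewrite mxE.
  apply: cvgD; apply: cvg_mulmx => k l; last by under eq_cvg do rewrite mxE; exact: dMh.
  exact: cvg_of_diff_quotient (dMh k l).
have : \det Z0 = 0 by exact: cvg_unique _ cZ (cvg_near_cst _ detZ).
rewrite det_ublock det_mx11 => /eqP; rewrite mulf_eq0 (negbTE (row_base_form_unit sM)) /=.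
by move=> /eqP wDv; apply/rowP => i; rewrite ord1 wDv mxE.
Unshelve. all: by end_near.
Qed.

End constant_rank.

Section trilinear.
Variables (R : numFieldType) (n : nat).
Local Notation V := 'rV[R]_n.
Implicit Types (u v w : V) (M : 'M[R]_n) (t : 'I_n -> R).

Definition form M u v : R := (u *m M *m v^T) 0 0.

Definition dual u t : R := \sum_a u 0 a * t a.

Definition contract3 (F : 'I_n -> 'I_n -> 'I_n -> R) u v w : R :=
  \sum_a \sum_b \sum_c u 0 a * v 0 b * w 0 c * F a b c.

(* With [N a = nablaM G F a p], [dirmx N u] is nabla_u F at p. *)
Definition dirmx (N : 'I_n -> 'M[R]_n) u : 'M[R]_n := \sum_a u 0 a *: N a.

Definition contract2 M (f : 'I_n -> 'I_n -> R) : R := \sum_a \sum_b M a b * f a b.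

Lemma eq_contract2 M f g : (forall a b, f a b = g a b) -> contract2 M f = contract2 M g.
Proof. by move=> fg; apply: eq_bigr => a _; apply: eq_bigr => b _; rewrite fg. Qed.

Lemma contract2D M f g :
  contract2 M (fun a b => f a b + g a b) = contract2 M f + contract2 M g.
Proof.
rewrite /contract2 -big_split; apply: eq_bigr => a _.
by rewrite -big_split; apply: eq_bigr => b _; rewrite mulrDr.
Qed.

Lemma formE M u v : form M u v = \sum_b \sum_c u 0 b * v 0 c * M b c.
Proof.
rewrite /form mxE; under eq_bigr do rewrite !mxE mulr_suml.
rewrite exchange_big /=; apply: eq_bigr => b _; apply: eq_bigr => c _.
by rewrite mulrAC.
Qed.

Lemma form_sym M u v : M^T = M -> form M u v = form M v u.
Proof.
by move=> MT; rewrite /form -[u *m M *m v^T]trmxK [in LHS]mxE !trmx_mul trmxK MT mulmxA.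
Qed.

Lemma form_delta M u a : form M u (delta_mx 0 a) = (u *m M) 0 a.
Proof.
rewrite /form mxE (bigD1 a) //= big1 => [|c ca]; rewrite !mxE ?eqxx ?mulr1 ?addr0 //.
by rewrite (negbTE ca) andbF mulr0.
Qed.

Lemma dirmx_sym (N : 'I_n -> 'M[R]_n) u :
  (forall a, (N a)^T = N a) -> (dirmx N u)^T = dirmx N u.
Proof.
by move=> NT; rewrite /dirmx linear_sum; apply: eq_bigr => a _; rewrite linearZ /= NT.
Qed.

Lemma form_dirmx (N : 'I_n -> 'M[R]_n) u v w :
  form (dirmx N u) v w = \sum_a u 0 a * form (N a) v w.
Proof.
rewrite /form mulmx_sumr mulmx_suml summxE; apply: eq_bigr => a _.
by rewrite -scalemxAr -scalemxAl mxE.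
Qed.

Lemma contract3_dirmx (N : 'I_n -> 'M[R]_n) u v w :
  contract3 (fun a b c => N a b c) u v w = form (dirmx N u) v w.
Proof.
rewrite form_dirmx; apply: eq_bigr => a _; rewrite formE mulr_sumr.
by apply: eq_bigr => b _; rewrite mulr_sumr; apply: eq_bigr => c _; rewrite !mulrA.
Qed.

Lemma contract3_metric M t u v w :
  contract3 (fun a b c => M a b * t c) u v w = form M u v * dual w t.
Proof.
rewrite formE !mulr_suml; apply: eq_bigr => a _; rewrite mulr_suml.
apply: eq_bigr => b _; rewrite mulr_sumr; apply: eq_bigr => c _.
by ring.
Qed.

Lemma dualB u t s : dual u (fun a => t a - s a) = dual u t - dual u s.
Proof. by rewrite /dual -sumrB; apply: eq_bigr => a _; rewrite mulrBr. Qed.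

Lemma row_delta u a : (u *m (delta_mx 0 a : V)^T) 0 0 = u 0 a.
Proof. by rewrite -[in RHS](mulmx1 u) -form_delta /form mulmx1. Qed.

Lemma dual_delta a t : dual (delta_mx 0 a) t = t a.
Proof.
rewrite /dual (bigD1 a) //= big1 => [|c ca]; rewrite !mxE ?eqxx ?mul1r ?addr0 //.
by rewrite (negbTE ca) andbF mul0r.
Qed.

Lemma contract3D F H u v w :
  contract3 (fun a b c => F a b c + H a b c) u v w = contract3 F u v w + contract3 H u v w.
Proof.
rewrite /contract3 -big_split; apply: eq_bigr => a _; rewrite -big_split.
by apply: eq_bigr => b _; rewrite -big_split; apply: eq_bigr => c _; rewrite mulrDr.
Qed.

Lemma contract3_swap12 F u v w :
  contract3 (fun a b c => F b a c) u v w = contract3 F v u w.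
Proof.
rewrite /contract3 exchange_big; apply: eq_bigr => a _; apply: eq_bigr => b _.
by apply: eq_bigr => c _; rewrite (mulrC (u 0 b)).
Qed.

Lemma contract3_swap23 F u v w :
  contract3 (fun a b c => F a c b) u v w = contract3 F u w v.
Proof.
apply: eq_bigr => a _; rewrite exchange_big; apply: eq_bigr => b _.
by apply: eq_bigr => c _; congr (_ * _); exact: mulrAC.
Qed.

Lemma formDl M u v w : form M (u + v) w = form M u w + form M v w.
Proof. by rewrite /form !mulmxDl [LHS]mxE. Qed.

Lemma formDr M u v w : form M u (v + w) = form M u v + form M u w.
Proof. by rewrite /form linearD /= mulmxDr [LHS]mxE. Qed.

Lemma dual_polarization (S M : 'M[R]_n) t : M^T = M ->
  (forall u v w, (u <= S)%MS -> (v <= S)%MS -> (w <= S)%MS ->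
     dual u t * form M v w + dual v t * form M w u + dual w t * form M u v = 0) ->
  (forall v, (v <= S)%MS -> (forall w, (w <= S)%MS -> form M v w = 0) -> v = 0) ->
  forall v, (v <= S)%MS -> dual v t = 0.
Proof.
(* If g(e, e) != 0 for some e in S, use (e, e, e) and then (v, e, e); otherwise g vanishes
   on S by polarisation, so S = 0. *)
move=> MT cyc nondeg v vS.
have [[e eS ee]|isotropic] := pselect (exists2 e, (e <= S)%MS & form M e e != 0).
  have et : dual e t = 0.
    have /eqP := cyc e e e eS eS eS; rewrite -mulr2n -mulrSr -mulrnAl.
    by rewrite mulf_eq0 (negbTE ee) orbF mulrn_eq0 => /eqP.
  have := cyc v e e vS eS eS; rewrite et !mul0r !addr0 => /eqP.
  by rewrite mulf_eq0 (negbTE ee) orbF => /eqP.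
suff -> : v = 0 by rewrite /dual big1 // => a _; rewrite mxE mul0r.
apply: nondeg => // w wS; have e0 x : (x <= S)%MS -> form M x x = 0.
  by move=> xS; apply/eqP; apply: contra_notT isotropic => xx; exists x.
have := e0 _ (addmx_sub vS wS); rewrite formDl !formDr !e0 // add0r addr0.
by rewrite (form_sym _ w) // -mulr2n => /eqP; rewrite mulrn_eq0 => /eqP.
Qed.

End trilinear.

Section symmetrization.
Variables (R : realType) (n : nat).
Implicit Types (u v w : 'rV[R]_n).

Lemma contract3_sym3 F u v w : contract3 (sym3 F) u v w =
  contract3 F u v w + contract3 F u w v + contract3 F v u w +
  contract3 F v w u + contract3 F w u v + contract3 F w v u.
Proof.
have cyc x y z : contract3 (fun a b c => F b c a) x y z = contract3 F y z x :=
  etrans (contract3_swap12 (fun a b c => F a c b) x y z) (contract3_swap23 F y x z).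
rewrite /sym3 !contract3D (contract3_swap23 F) (contract3_swap12 F) cyc.
rewrite (etrans (contract3_swap23 (fun a b c => F b a c) u v w) (contract3_swap12 F u w v)).
by rewrite (etrans (contract3_swap23 (fun a b c => F b c a) u v w) (cyc u w v)).
Qed.

Lemma sym3_cyclic (N : 'I_n -> 'M[R]_n) (M : 'M[R]_n) (t : 'I_n -> R) :
  (forall a, (N a)^T = N a) -> M^T = M ->
  (forall a b c, sym3 (fun a b c => N a b c) a b c = sym3 (fun a b c => M a b * t c) a b c) ->
  forall u v w,
    form (dirmx N u) v w + form (dirmx N v) w u + form (dirmx N w) u v =
    form M u v * dual w t + form M v w * dual u t + form M w u * dual v t.
Proof.
move=> NT MT Hs u v w.
have E : contract3 (sym3 (fun a b c => N a b c)) u v w =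
         contract3 (sym3 (fun a b c => M a b * t c)) u v w.
  by congr contract3; apply/funext => a; apply/funext => b; apply/funext => c; exact: Hs.
rewrite !contract3_sym3 !contract3_dirmx !contract3_metric in E.
rewrite [form (dirmx N u) w v]form_sym ?dirmx_sym // in E.
rewrite [form (dirmx N v) u w]form_sym ?dirmx_sym // in E.
rewrite [form (dirmx N w) v u]form_sym ?dirmx_sym // in E.
rewrite [form M u w]form_sym // [form M v u]form_sym // [form M w v]form_sym // in E.
have two : (2 : R) != 0 by rewrite pnatr_eq0.
apply: (mulfI two); move: E.
set Nu := form (dirmx N u) v w; set Nv := form (dirmx N v) w u.
set Nw := form (dirmx N w) u v.
set tu := dual u t; set tv := dual v t; set tw := dual w t.
set Muv := form M u v; set Mvw := form M v w; set Mwu := form M w u.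
move=> E; have -> : 2 * (Nu + Nv + Nw) = Nu + Nu + Nv + Nv + Nw + Nw by ring.
by rewrite E; ring.
Qed.

Lemma contract2_sym3 (M : 'M[R]_n) (F : 'I_n -> 'I_n -> 'I_n -> R) c : M^T = M ->
  contract2 M (fun a b => sym3 F a b c) = 2 * (contract2 M (fun a b => F a b c) +
    contract2 M (fun a b => F a c b) + contract2 M (fun a b => F c a b)).
Proof.
move=> MT; have Msym a b : M b a = M a b by rewrite -[in LHS]MT mxE.
have -> : contract2 M (fun a b => sym3 F a b c) =
    contract2 M (fun a b => F a b c + F a c b + F c a b) +
    contract2 M (fun a b => F b a c + F b c a + F c b a).
  by rewrite -contract2D; apply: eq_contract2 => a b; rewrite /sym3; ring.
rewrite [X in _ + X]exchange_big /=.
under [X in _ + X]eq_bigr => j _ do under eq_bigr => i _ do rewrite -Msym.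
by rewrite mulr_natl mulr2n -!contract2D.
Qed.

End symmetrization.

Section levi_civita.
Variables (R : realType) (n : nat).
Local Notation V := 'rV[R]_n.
Implicit Types (G F : V -> 'M[R]_n) (y : V -> V) (a : 'I_n) (p : V).

Definition christoffelmx G a p : 'M[R]_n := \matrix_(b, k) christoffel G k a b p.

Definition nablaM G F a p : 'M[R]_n :=
  partialmx F a p - christoffelmx G a p *m F p - F p *m (christoffelmx G a p)^T.

Definition nablaRow G y a p : V := partialmx y a p + y p *m christoffelmx G a p.

Lemma nablaT_nablaM G F a b c p : nablaT G F a b c p = nablaM G F a p b c.
Proof.
rewrite !mxE /nablaT; congr (_ - _ - _); apply: eq_bigr => k _; rewrite !mxE //.
exact: mulrC.
Qed.

Lemma nablaV_nablaRow G x y p : nablaV G x y p = \sum_a x p 0 a *: nablaRow G y a p.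
Proof.
apply/rowP => k; rewrite !mxE summxE -big_split /=.
apply: eq_bigr => i _; rewrite !mxE mulrDr; congr (_ + _).
by rewrite mulr_sumr; apply: eq_bigr => j _; rewrite !mxE; ring.
Qed.

Lemma partialmx_tr G a p : partialmx (fun q => (G q)^T) a p = (partialmx G a p)^T.
Proof.
by apply/matrixP => i j; rewrite !mxE; under [X in partial _ X]funext do rewrite mxE.
Qed.

Lemma christoffelmx_mul_metric G a p : (G p)^T = G p -> G p \in unitmx ->
  christoffelmx G a p *m G p =
    2^-1 *: \matrix_(b, c) (partialmx G a p b c + partialmx G b p a c - partialmx G c p a b).
Proof.
move=> GT Gu; set S := \matrix_(b, c) _.
have GiT : (ginv G p)^T = ginv G p by rewrite /ginv trmx_inv GT.
have -> : christoffelmx G a p = 2^-1 *: (S *m ginv G p).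
  apply/matrixP => b k; rewrite !mxE /christoffel; congr (_ * _).
  by apply: eq_bigr => l _; rewrite -[in LHS]GiT !mxE mulrC.
by rewrite -scalemxAl -mulmxA mulVmx // mulmx1.
Qed.

Lemma nablaM_metric G a p : (G p)^T = G p -> G p \in unitmx ->
  (partialmx G a p)^T = partialmx G a p -> nablaM G G a p = 0.
Proof.
move=> GT Gu dGT; rewrite /nablaM -[G p in X in _ - X]GT -trmx_mul.
rewrite christoffelmx_mul_metric //; apply/matrixP => b c.
have /matrixP/(_ c b) := dGT; rewrite !mxE => ->.
by field.
Qed.

Lemma nablaM_sym G F a p : (F p)^T = F p -> (partialmx F a p)^T = partialmx F a p ->
  (nablaM G F a p)^T = nablaM G F a p.
Proof.
move=> FT dFT; rewrite /nablaM !linearB /= dFT !trmx_mul trmxK FT.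
by rewrite addrAC.
Qed.

Lemma nablaM_kernel G F a p (v w : V) : (F p)^T = F p ->
  v *m F p = 0 -> w *m F p = 0 -> v *m nablaM G F a p *m w^T = v *m partialmx F a p *m w^T.
Proof.
move=> FT vF wF; have Fw : F p *m w^T = 0 by rewrite -FT -trmx_mul wF trmx0.
rewrite /nablaM !mulmxBr !mulmxBl -!mulmxA Fw (mulmxA v (F p)) vF.
by rewrite !mulmx0 mul0mx !subr0.
Qed.

Lemma nablaRow_kernel G F y a p : derivable_mx y a p -> derivable_mx F a p ->
  (\forall q \near p, y q *m F q = 0) ->
  nablaRow G y a p *m F p = - (y p *m nablaM G F a p).
Proof.
move=> dy dF yF; have /eqP := partialmx_near_cst a yF.
rewrite partialmx_mul // addr_eq0 => /eqP dyF.
rewrite /nablaM mulmxDl dyF !mulmxBr (mulmxA (y p) (F p)) (nbhs_singleton yF) mul0mx.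
by rewrite subr0 opprB mulmxA addrC.
Qed.

Lemma nablaV_kernel G F x y p : (forall a, derivable_mx y a p) ->
  (forall a, derivable_mx F a p) -> (\forall q \near p, y q *m F q = 0) ->
  nablaV G x y p *m F p = - (y p *m dirmx (fun a => nablaM G F a p) (x p)).
Proof.
move=> dy dF yF; rewrite nablaV_nablaRow mulmx_suml mulmx_sumr -sumrN.
by apply: eq_bigr => a _; rewrite -scalemxAl nablaRow_kernel // -scalemxAr scalerN.
Qed.

End levi_civita.

Section metric_domain.
Variables (R : realType) (n : nat) (U : set 'rV[R]_n) (G : 'rV[R]_n -> 'M[R]_n).
Local Notation V := 'rV[R]_n.
Hypotheses (oU : open U) (mG : metric_on U G).

Lemma near_domain p : U p -> \forall q \near p, U q.
Proof. by move=> Up; apply: open_nbhs_nbhs. Qed.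

Lemma metric_sym p : U p -> (G p)^T = G p.
Proof. by move=> Up; case: (mG.2 p Up). Qed.

Lemma metric_unit p : U p -> G p \in unitmx.
Proof. by move=> Up; case: (mG.2 p Up). Qed.

Lemma ginv_sym p : U p -> (ginv G p)^T = ginv G p.
Proof. by move=> Up; rewrite /ginv trmx_inv metric_sym. Qed.

Lemma derivable_metric a p : U p -> derivable_mx G a p.
Proof. exact: smooth_mx_derivable mG.1. Qed.

Lemma partialmx_metric_sym a p : U p -> (partialmx G a p)^T = partialmx G a p.
Proof.
by move=> Up; apply: partialmx_sym; apply: filterS (near_domain Up); exact: metric_sym.
Qed.

Lemma partialmx_metric a p : U p ->
  partialmx G a p = christoffelmx G a p *m G p + G p *m (christoffelmx G a p)^T.
Proof.
move=> Up; apply/eqP; rewrite -subr_eq0 opprD addrA; apply/eqP.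
by apply: nablaM_metric; [exact: metric_sym|exact: metric_unit|exact: partialmx_metric_sym].
Qed.

Lemma gtraceE F p : gtrace G F p = \tr (ginv G p *m (F p)^T).
Proof. by apply: eq_bigr => a _; rewrite mxE; apply: eq_bigr => b _; rewrite !mxE. Qed.

Lemma gtrace_nablaM F c p : U p -> derivable_mx F c p ->
  gtrace G (nablaM G F c) p = partial c (gtrace G F) p.
Proof.
move=> Up dF; have Gpu := metric_unit Up.
have Gu : \forall q \near p, G q \in unitmx.
  by apply: filterS (near_domain Up); exact: metric_unit.
have dG : derivable_mx G c p := derivable_metric Up.
have dGi := derivable_mx_inv Gu dG.
have dFT : derivable_mx (fun q => (F q)^T) c p.
  by move=> i j; under [X in derivable X]funext do rewrite mxE; exact: dF.
rewrite gtraceE (_ : gtrace G F = fun q => \tr (ginv G q *m (F q)^T)); last first.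
  by apply: funext => q; exact: gtraceE.
rewrite partial_mxtrace; last exact: derivable_mx_mul.
rewrite /ginv partialmx_mul // partialmx_inv // partialmx_tr partialmx_metric //.
set Gi := invmx (G p); set Ga := christoffelmx G c p; set FT := (F p)^T.
rewrite mulNmx mxtraceD raddfN /=.
have -> : \tr (Gi *m (Ga *m G p + G p *m Ga^T) *m Gi *m FT) =
    \tr (Gi *m (Ga *m FT)) + \tr (Gi *m (FT *m Ga^T)).
  rewrite mulmxDr !mulmxDl mxtraceD; congr (_ + _).
    by rewrite -!mulmxA (mulmxA (G p)) mulmxV // mul1mx.
  by rewrite !mulmxA mulVmx // mul1mx [RHS]mxtrace_mulC !mulmxA.
rewrite /nablaM !linearB /= !trmx_mul trmxK -/FT -/Ga.
by rewrite addrC opprD addrA addrAC.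
Qed.

End metric_domain.

Section eigenspace.
Variables (R : realType) (n : nat) (U : set 'rV[R]_n) (G T : 'rV[R]_n -> 'M[R]_n).
Variable rho : 'rV[R]_n -> R.
Local Notation V := 'rV[R]_n.
Hypotheses (oU : open U) (mG : metric_on U G) (sT : symmetric_field_on U T).
Hypotheses (srho : smooth_on U rho) (reg : regular_eigenspace_on U G T rho).

Definition Tshift q : 'M[R]_n := T q - rho q *: G q.

Lemma endo_shift q : G q \in unitmx ->
  endo G T q - (rho q)%:M = Tshift q *m ginv G q.
Proof. by move=> Gu; rewrite mulmxBl -scalemxAl mulmxV // scalemx1. Qed.

Lemma in_eig_ker q v : U q -> in_eig G T rho q v -> v *m Tshift q = 0.
Proof.
move=> Uq; have Gu := metric_unit mG Uq.
rewrite /in_eig /Espace /eigenspace sub_kermx endo_shift // mulmxA => /eqP vA.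
by rewrite -(mulmxKV Gu (v *m Tshift q)) -/(ginv G q) vA mul0mx.
Qed.

Lemma rank_Tshift p q : U p -> U q -> \rank (Tshift q) = \rank (Tshift p).
Proof.
have rkE r : U r -> \rank (Espace G T rho r) = (n - \rank (Tshift r))%N.
  move=> Ur; have Gu := metric_unit mG Ur.
  rewrite /Espace /eigenspace mxrank_ker endo_shift //.
  by rewrite mxrankMfree // row_free_unit unitmx_inv.
move=> Up Uq; have [[r rE] _] := reg.
have Eqp : (n - \rank (Tshift q) = n - \rank (Tshift p))%N by rewrite -!rkE // !rE.
by rewrite -(subKn (rank_leq_col (Tshift q))) Eqp subKn // rank_leq_col.
Qed.

Lemma Tshift_sym q : U q -> (Tshift q)^T = Tshift q.
Proof. by move=> Uq; rewrite linearB linearZ /= (metric_sym mG Uq) sT.2. Qed.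

Lemma derivable_Tshift a p : U p -> derivable_mx Tshift a p.
Proof.
move=> Up i j; under [X in derivable X]funext do rewrite !mxE.
apply: derivableB; first exact: smooth_mx_derivable sT.1 Up i j.
apply: derivableM; first exact: smooth_derivable srho Up.
exact: (derivable_metric mG (a := a) Up) i j.
Qed.

Lemma nablaM_Tshift a p : U p ->
  nablaM G Tshift a p = nablaM G T a p - partial a rho p *: G p.
Proof.
move=> Up; have dG := derivable_metric mG (a := a) Up.
have partialmx_Tshift :
    partialmx Tshift a p = partialmx T a p - partial a rho p *: G p - rho p *: partialmx G a p.
  apply/matrixP => i j; rewrite !mxE /partial.
  under [X in derive X]funext do rewrite !mxE.
  rewrite deriveB; [|exact: smooth_mx_derivable sT.1 Up i j|].
    rewrite deriveM; [|exact: smooth_derivable srho Up|exact: dG i j].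
    rewrite opprD addrA addrAC; congr (_ - _ - _); first exact: mulrC.
  by apply: derivableM; [exact: smooth_derivable srho Up|exact: dG i j].
rewrite /nablaM partialmx_Tshift (partialmx_metric oU mG a Up) /Tshift mulmxBr mulmxBl.
rewrite -scalemxAr -scalemxAl scalerDr.
set GaT := christoffelmx G a p *m T p; set TGa := T p *m (christoffelmx G a p)^T.
set GaG := christoffelmx G a p *m G p; set GGa := G p *m (christoffelmx G a p)^T.
by apply/matrixP => i j; rewrite !mxE; ring.
Qed.

Lemma partialmx_Tshift_kernel a p (v w : V) : U p ->
  v *m Tshift p = 0 -> w *m Tshift p = 0 -> v *m partialmx Tshift a p *m w^T = 0.
Proof.
move=> Up vA wA; set e := ecoord R a.
have near_line : \forall h \near 0^', U (h *: e + p).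
  have : (h *: e + p) @[h --> 0^'] --> 0 *: e + p.
    by apply: cvgD; [apply: cvgZr_tmp; exact: cvg_within | exact: cvg_cst].
  by rewrite scale0r add0r; apply; exact: near_domain.
apply: (derivative_kernel_form_eq0 (M := fun h => Tshift (h *: e + p)) (v := w));
  rewrite scale0r add0r //.
- exact: Tshift_sym.
- by apply: filterS near_line => h Uh; rewrite (rank_Tshift Up Uh).
- by move=> i j; rewrite [X in _ --> X]mxE; exact: (derivable_Tshift (a := a) Up).
Qed.

Lemma nablaT_eigen a p (v w : V) : U p -> v *m Tshift p = 0 -> w *m Tshift p = 0 ->
  v *m nablaM G T a p *m w^T = partial a rho p *: (v *m G p *m w^T).
Proof.
move=> Up vA wA; apply/eqP; rewrite -subr_eq0 scalemxAl scalemxAr -mulmxBl -mulmxBr.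
by rewrite -nablaM_Tshift // nablaM_kernel ?Tshift_sym // partialmx_Tshift_kernel.
Qed.

Lemma gformE p (x y : V) : gform G p x y = form (G p) x y.
Proof. by rewrite formE; apply: eq_bigr => a _; apply: eq_bigr => b _; ring. Qed.

Lemma nablaM_T_sym a p : U p -> (nablaM G T a p)^T = nablaM G T a p.
Proof.
move=> Up; apply: nablaM_sym; first exact: sT.2.
by apply: partialmx_sym; apply: filterS (near_domain oU Up); exact: sT.2.
Qed.

Lemma form_nablaT_eigen u p (v w : V) : U p -> v *m Tshift p = 0 -> w *m Tshift p = 0 ->
  form (dirmx (fun a => nablaM G T a p) u) v w =
    dual u (grad rho p) * form (G p) v w.
Proof.
move=> Up vA wA; rewrite form_dirmx mulr_suml; apply: eq_bigr => a _.
by rewrite /form nablaT_eigen // mxE mulrA.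
Qed.

Lemma symbr_Tshift (x y : V -> V) p : U p -> smooth_vf_on U x -> smooth_vf_on U y ->
  (forall q, U q -> in_eig G T rho q (x q)) -> (forall q, U q -> in_eig G T rho q (y q)) ->
  symbr G x y p *m Tshift p =
    dual (x p) (grad rho p) *: (y p *m G p) - y p *m dirmx (fun a => nablaM G T a p) (x p) +
    (dual (y p) (grad rho p) *: (x p *m G p) - x p *m dirmx (fun a => nablaM G T a p) (y p)).
Proof.
move=> Up sx sy xE yE.
have dirmxE (u : V) : dirmx (fun a => nablaM G Tshift a p) u =
    dirmx (fun a => nablaM G T a p) u - dual u (grad rho p) *: G p.
  rewrite /dirmx /dual scaler_suml -sumrB; apply: eq_bigr => a _.
  by rewrite nablaM_Tshift // scalerBr scalerA.
have kerE (z : V -> V) : smooth_vf_on U z -> (forall q, U q -> in_eig G T rho q (z q)) ->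
    forall w, nablaV G w z p *m Tshift p =
              - (z p *m dirmx (fun a => nablaM G Tshift a p) (w p)).
  move=> sz zE w; apply: nablaV_kernel => [a|a|].
  - exact: smooth_vf_derivable sz Up.
  - exact: derivable_Tshift.
  - by apply: filterS (near_domain oU Up) => q Uq; exact: in_eig_ker Uq (zE q Uq).
by rewrite /symbr mulmxDl !kerE // !dirmxE !mulmxBr -!scalemxAr !opprB.
Qed.

Definition conformal_eq p (t : 'I_n -> R) : Prop := forall a b c,
  sym3 (fun a b c => nablaT G T a b c p) a b c = sym3 (fun a b c => G p a b * t c) a b c.

Lemma nablaT_cyclic p t : U p -> conformal_eq p t -> forall u v w,
  form (dirmx (fun a => nablaM G T a p) u) v w + form (dirmx (fun a => nablaM G T a p) v) w u +
  form (dirmx (fun a => nablaM G T a p) w) u v =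
  form (G p) u v * dual w t + form (G p) v w * dual u t + form (G p) w u * dual v t.
Proof.
move=> Up Hs; apply: sym3_cyclic => [a||a b c].
- exact: nablaM_T_sym.
- by rewrite (metric_sym mG Up).
- by rewrite -Hs /sym3 !nablaT_nablaM.
Qed.

Lemma grad_eq_on_eigenspace p t : U p -> conformal_eq p t ->
  forall v, in_eig G T rho p v -> dual v (fun a => grad rho p a - t a) = 0.
Proof.
move=> Up Hs; apply: dual_polarization (metric_sym mG Up) _ _ => [u v w uE vE wE|v vE].
  have uA := in_eig_ker Up uE; have vA := in_eig_ker Up vE; have wA := in_eig_ker Up wE.
  have := nablaT_cyclic Up Hs u v w; rewrite !form_nablaT_eigen // !dualB.
  by move/eqP; rewrite -subr_eq0 => /eqP <-; ring.
by move=> vw; apply: (reg.2 p Up v vE) => w wE; rewrite gformE; exact: vw.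
Qed.

Lemma Tshift_symbr p t (x y : V -> V) : U p -> conformal_eq p t ->
  smooth_vf_on U x -> smooth_vf_on U y ->
  (forall q, U q -> in_eig G T rho q (x q)) -> (forall q, U q -> in_eig G T rho q (y q)) ->
  forall a, \sum_b (T p a b - rho p * G p a b) * symbr G x y p 0 b =
            gform G p (x p) (y p) * (grad rho p a - t a).
Proof.
move=> Up Hs sx sy xE yE a.
set N := fun c => nablaM G T c p; have GT := metric_sym mG Up.
have NT u : (dirmx N u)^T = dirmx N u by apply: dirmx_sym => c; exact: nablaM_T_sym.
have grad_t z : in_eig G T rho p z -> dual z (grad rho p) = dual z t.
  by move/(grad_eq_on_eigenspace Up Hs)/eqP; rewrite dualB subr_eq0 => /eqP.
have xA := in_eig_ker Up (xE p Up); have yA := in_eig_ker Up (yE p Up).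
have -> : \sum_b (T p a b - rho p * G p a b) * symbr G x y p 0 b =
    (symbr G x y p *m Tshift p) 0 a.
  rewrite mxE; apply: eq_bigr => b _.
  by rewrite mulrC -(Tshift_sym Up) mxE /Tshift !mxE.
have := nablaT_cyclic Up Hs (x p) (y p) 'e_a.
rewrite symbr_Tshift // -row_delta -trace_mx11 !mulmxDl !mulNmx -!scalemxAl.
rewrite !linearD !linearN !linearZ /= !trace_mx11 -!/(form _ _ _) => cyc.
rewrite [form (dirmx _ 'e_a) _ _]form_nablaT_eigen // !dual_delta in cyc.
rewrite [form (G p) 'e_a _]form_sym // in cyc.
rewrite [form (dirmx _ (y p)) 'e_a _]form_sym ?NT // in cyc.
rewrite gformE (grad_t _ (xE p Up)) (grad_t _ (yE p Up)).
lra.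
Qed.

End eigenspace.

Section traceless.
Variables (R : realType) (n : nat) (U : set 'rV[R]_n) (G T : 'rV[R]_n -> 'M[R]_n).
Hypotheses (oU : open U) (mG : metric_on U G) (sT : symmetric_field_on U T).
Hypothesis trT : forall q, U q -> gtrace G T q = 0.

Lemma gtrace_nablaT c p : U p -> gtrace G (nablaM G T c) p = 0.
Proof.
move=> Up; rewrite (gtrace_nablaM oU mG Up); last exact: smooth_mx_derivable sT.1 Up.
by apply: partial_near_cst; apply: filterS (near_domain oU Up); exact: trT.
Qed.

Lemma ginv_metric_contract p (t : 'I_n -> R) c : U p ->
  \sum_a \sum_b ginv G p a b * (G p a c * t b) = t c.
Proof.
move=> Up; rewrite exchange_big /= -(dual_delta c t); apply: eq_bigr => b _.
under eq_bigr do rewrite mulrA; rewrite -mulr_suml; congr (_ * _).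
have -> : ('e_c : 'rV[R]_n) 0 b = (ginv G p *m G p) b c.
  by rewrite mulVmx ?(metric_unit mG) // !mxE eqxx.
by rewrite mxE; apply: eq_bigr => a _; rewrite -[ginv G p in LHS](ginv_sym mG Up) mxE.
Qed.

Lemma conformal_one_form p t : U p -> conformal_eq G T p t ->
  forall c, t c = 2 / (n%:R + 2) * divT G T c p.
Proof.
(* Trace the identity over (a, b) with g^-1: 2 (2 nabla.T) = 2 ((n + 2) t). *)
move=> Up Hs c; have GT := metric_sym mG Up; have GiT := ginv_sym mG Up.
set Gi := ginv G p; set N := fun a b => nablaT G T a b c p.
have div_N : contract2 Gi N = divT G T c p.
  rewrite /divT exchange_big; apply: eq_bigr => a _; apply: eq_bigr => b _.
  by rewrite -[Gi in LHS]GiT mxE.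
have NT a b : nablaT G T a c b p = N a b.
  by rewrite /N !nablaT_nablaM -[nablaM _ _ _ _ in LHS](nablaM_T_sym G oU sT a Up) mxE.
have trN : contract2 Gi (fun a b => nablaT G T c a b p) = 0.
  by rewrite -(gtrace_nablaT c Up); apply: eq_contract2 => a b; rewrite nablaT_nablaM.
have trG : contract2 Gi (G p) = n%:R.
  rewrite (_ : contract2 _ _ = gtrace G G p) // gtraceE GT.
  by rewrite mulVmx ?mxtrace1 // (metric_unit mG).
have : contract2 Gi (fun a b => sym3 (fun a b c => nablaT G T a b c p) a b c) =
       contract2 Gi (fun a b => sym3 (fun a b c => G p a b * t c) a b c).
  by apply: eq_contract2 => a b; rewrite Hs.
have tG : contract2 Gi (fun a b => G p a c * t b) = t c := ginv_metric_contract t c Up.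
have tGT : contract2 Gi (fun a b => G p c a * t b) = t c.
  by rewrite -tG; apply: eq_contract2 => a b; rewrite -[G p in LHS]GT mxE.
have trGt : contract2 Gi (fun a b => G p a b * t c) = n%:R * t c.
  rewrite -trG /contract2 mulr_suml; apply: eq_bigr => a _.
  by rewrite mulr_suml; apply: eq_bigr => b _; rewrite mulrA.
rewrite !contract2_sym3 // div_N (eq_contract2 _ NT) div_N trN tG tGT trGt => E.
have n2 : n%:R + 2 != 0 :> R by rewrite -(natrD R n 2) pnatr_eq0 addn2.
by apply: (mulIf n2); rewrite [RHS]mulrAC divfK //; lra.
Qed.

End traceless.

Theorem lemma4 (R : realType) (n : nat) (U : set 'rV[R]_n)
  (G T : 'rV[R]_n -> 'M[R]_n) (rho : 'rV[R]_n -> R) :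
  open U -> metric_on U G -> smooth_on U rho ->
  regular_eigenspace_on U G T rho ->
  (killing_on U G T ->
     (forall x y : 'rV[R]_n -> 'rV[R]_n,
        smooth_vf_on U x -> smooth_vf_on U y ->
        (forall q, U q -> in_eig G T rho q (x q)) ->
        (forall q, U q -> in_eig G T rho q (y q)) ->
        forall p, U p -> forall a : 'I_n,
          \sum_(b < n) (T p a b - rho p * G p a b) * symbr G x y p 0 b =
          gform G p (x p) (y p) * (partial a rho p - 0)) /\
     (forall p, U p -> forall v, in_eig G T rho p v ->
        \sum_(a < n) v 0 a * partial a rho p = 0)) /\
  (conformal_on U G T ->
     (forall x y : 'rV[R]_n -> 'rV[R]_n,
        smooth_vf_on U x -> smooth_vf_on U y ->
        (forall q, U q -> in_eig G T rho q (x q)) ->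
        (forall q, U q -> in_eig G T rho q (y q)) ->
        forall p, U p -> forall a : 'I_n,
          \sum_(b < n) (T p a b - rho p * G p a b) * symbr G x y p 0 b =
          gform G p (x p) (y p) *
            (partial a rho p - 2 / (n%:R + 2) * divT G T a p)) /\
     (forall p, U p -> forall v, in_eig G T rho p v ->
        \sum_(a < n) v 0 a *
          (2 * divT G T a p - (n%:R + 2) * partial a rho p) = 0)).
Proof.
move=> oU mG srho reg; split.
- case=> sT killT.
  have Hs p : U p -> conformal_eq G T p (fun=> 0).
    by move=> Up a b c; rewrite killT // /sym3 !mulr0 !addr0.
  split => [x y sx sy xE yE p Up a | p Up v vE].
    exact: (Tshift_symbr oU mG sT srho reg Up (Hs p Up)).
  rewrite -[RHS](grad_eq_on_eigenspace oU mG sT srho reg Up (Hs p Up) vE).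
  by apply: eq_bigr => a _; rewrite /= subr0.
case=> sT [trT [t conf]].
have tE p : U p -> forall c, t c p = 2 / (n%:R + 2) * divT G T c p.
  by move=> Up; exact: (conformal_one_form oU mG sT trT Up (conf p Up)).
split => [x y sx sy xE yE p Up a | p Up v vE].
  rewrite -tE //; exact: (Tshift_symbr oU mG sT srho reg Up (conf p Up)).
have n2 : n%:R + 2 != 0 :> R by rewrite -(natrD R n 2) pnatr_eq0 addn2.
rewrite -[RHS](mulr0 (- (n%:R + 2))).
rewrite -[X in _ * X](grad_eq_on_eigenspace oU mG sT srho reg Up (conf p Up) vE).
by rewrite /dual mulr_sumr; apply: eq_bigr => a _; rewrite tE // /grad; field.
Qed.
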